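(* In the setting of the context, assume in addition that there is $\mathcal{R}>0$ with $\nabla m(x)=0$ whenever $\|x\|\ge\mathcal{R}$. Then with $M=\frac34$ and $R=8L\mathcal{R}$, for all $x,y\in\mathbb{H}$ with $\|x-y\|_\alpha\ge R$, $$\mathbf{1}_{x^l\ne y^l}\Big\langle\frac{x^l-y^l}{\|x^l-y^l\|},b(x)-b(y)\Big\rangle+\mathbf{1}_{x^h\ne y^h}\,\alpha\Big\langle\frac{x^h-y^h}{\|x^h-y^h\|},b(x)-b(y)\Big\rangle\le M\|x-y\|_\alpha .$$
   Context: Let $(\mathbb{H},\langle\cdot,\cdot\rangle,\|\cdot\|)$ be a separable real Hilbert space and $\mathcal{G}$ a trace-class, symmetric, positive definite operator on $\mathbb{H}$. Let $(e_k)_{k\ge1}$ be an orthonormal basis with $\mathcal{G}e_k=\lambda_ke_k$, where $\lambda_k>0$, $\lambda_k\downarrow0$, $\lambda_1=1$, $\sum_k\lambda_k<\infty$. Let $U(x)=\frac a2\|x\|^2+m(x)$ with $a\ge0$, where $m:\mathbb{H}\to\mathbb{R}$ is bounded from below and Fréchet differentiable with $\|\nabla m(x)-\nabla m(y)\|\le L\|x-y\|$ for all $x,y$, for some $L\ge1$. Set $b(x)=-\mathcal{G}\nabla U(x)$. Let $n=\min\{k\in\mathbb{N}_+:\lambda_{k+1}<\frac{1}{2L}\}$, $\mathbb{H}^l=\mathrm{span}\{e_1,\dots,e_n\}$, $\mathbb{H}^h$ its orthogonal complement, $x^l,x^h$ the orthogonal projections, $\alpha=2(1+L)$ and $\|x\|_\alpha=\|x^l\|+\alpha\|x^h\|$.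 *)

From Stdlib Require Import Reals Lra Classical ClassicalEpsilon.
Open Scope R_scope.

Record HilbertSpace := {
  hcar :> Type;
  hzero : hcar;
  hadd : hcar -> hcar -> hcar;
  hscal : R -> hcar -> hcar;
  hinner : hcar -> hcar -> R;
  hadd_assoc : forall x y z, hadd x (hadd y z) = hadd (hadd x y) z;
  hadd_comm : forall x y, hadd x y = hadd y x;
  hadd_zero : forall x, hadd hzero x = x;
  hadd_opp : forall x, hadd x (hscal (-1) x) = hzero;
  hscal_one : forall x, hscal 1 x = x;
  hscal_assoc : forall a b x, hscal a (hscal b x) = hscal (a * b) x;
  hscal_distr_l : forall a x y, hscal a (hadd x y) = hadd (hscal a x) (hscal a y);
  hscal_distr_r : forall a b x, hscal (a + b) x = hadd (hscal a x) (hscal b x);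
  hinner_sym : forall x y, hinner x y = hinner y x;
  hinner_add : forall x y z, hinner (hadd x y) z = hinner x z + hinner y z;
  hinner_scal : forall a x y, hinner (hscal a x) y = a * hinner x y;
  hinner_pos : forall x, 0 <= hinner x x;
  hinner_def : forall x, hinner x x = 0 -> x = hzero;
  hcomplete : forall u : nat -> hcar,
    (forall eps, eps > 0 -> exists N, forall p q, (p >= N)%nat -> (q >= N)%nat ->
        sqrt (hinner (hadd (u p) (hscal (-1) (u q))) (hadd (u p) (hscal (-1) (u q)))) < eps) ->
    exists l, forall eps, eps > 0 -> exists N, forall p, (p >= N)%nat ->
        sqrt (hinner (hadd (u p) (hscal (-1) l)) (hadd (u p) (hscal (-1) l))) < eps
}.

Section Ops.
Variable H : HilbertSpace.

Definition hsub (x y : H) : H := hadd H x (hscal H (-1) y).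
Definition hnorm (x : H) : R := sqrt (hinner H x x).

Fixpoint hsumN (f : nat -> H) (N : nat) : H :=
  match N with
  | O => hzero H
  | S N' => hadd H (hsumN f N') (f N')
  end.

Definition hconverges (u : nat -> H) (l : H) : Prop :=
  forall eps, eps > 0 -> exists N, forall p, (p >= N)%nat -> hnorm (hsub (u p) l) < eps.

(** (e_k) (indexed from 0 here, e k = e_{k+1} of the paper) is an orthonormal basis *)
Definition orthonormal_basis (e : nat -> H) : Prop :=
  (forall i j, hinner H (e i) (e j) = if Nat.eq_dec i j then 1 else 0) /\
  (forall x, hconverges (fun N => hsumN (fun k => hscal H (hinner H x (e k)) (e k)) N) x).

(** Frechet differentiability of f with gradient g (Riesz representer of the derivative) *)
Definition frechet_gradient (f : H -> R) (g : H -> H) : Prop :=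
  forall x eps, eps > 0 -> exists delta, delta > 0 /\
    forall h, hnorm h < delta ->
      Rabs (f (hadd H x h) - f x - hinner H (g x) h) <= eps * hnorm h.

Definition bounded_linear (G : H -> H) : Prop :=
  (forall x y, G (hadd H x y) = hadd H (G x) (G y)) /\
  (forall c x, G (hscal H c x) = hscal H c (G x)) /\
  (exists C, forall x, hnorm (G x) <= C * hnorm x).

Definition symmetric_op (G : H -> H) : Prop :=
  forall x y, hinner H (G x) y = hinner H x (G y).

Definition positive_definite_op (G : H -> H) : Prop :=
  forall x, x <> hzero H -> hinner H (G x) x > 0.

(** orthogonal projection onto span{e_1,...,e_n} (paper's 1-based indexing),
    i.e. onto span{e 0, ..., e (n-1)} *)
Definition proj_low (e : nat -> H) (n : nat) (x : H) : H :=
  hsumN (fun k => hscal H (hinner H x (e k)) (e k)) n.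
Definition proj_high (e : nat -> H) (n : nat) (x : H) : H :=
  hsub x (proj_low e n x).

Definition norm_alpha (e : nat -> H) (n : nat) (alpha : R) (x : H) : R :=
  hnorm (proj_low e n x) + alpha * hnorm (proj_high e n x).

End Ops.

Definition indic (P : Prop) : R :=
  if excluded_middle_informative P then 1 else 0.

(* Since [G] is symmetric, [b x - b y = -G (a (x - y) + (grad m x - grad m y))].  Tested
   against the low (resp. high) part [d] of [x - y], the confining term [-a <G d, x - y>]
   equals [-a <G d, d> <= 0], because [G] is positive and diagonal in the basis (so it
   does not mix the two parts).  What remains is at most [|G d| / |d|] times
   [|grad m x - grad m y|], where [|G d| <= lambda_1 |d| = |d|] on the low part and
   [|G d| <= lambda_(n+1) |d|] on the high part.  A Lipschitz gradient vanishing outside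
   the ball of radius [Rcal] is bounded by [L Rcal], so the left-hand side is at most
   [(1 + alpha lambda_(n+1)) 2 L Rcal <= 6 L Rcal = M R <= M |x - y|_alpha]. *)
From Stdlib Require Import Reals Lra Lia Classical ClassicalEpsilon.
Open Scope R_scope.

Section HilbertAlgebra.
Variable H : HilbertSpace.

Lemma hinner_addr (u v w : H) : hinner H u (hadd H v w) = hinner H u v + hinner H u w.
Proof. rewrite hinner_sym, hinner_add, (hinner_sym H v), (hinner_sym H w). reflexivity. Qed.

Lemma hinner_scalr a (u v : H) : hinner H u (hscal H a v) = a * hinner H u v.
Proof. rewrite hinner_sym, hinner_scal, hinner_sym. reflexivity. Qed.

Lemma hinner_subl (u v w : H) : hinner H (hsub H u v) w = hinner H u w - hinner H v w.
Proof. unfold hsub. rewrite hinner_add, hinner_scal. ring. Qed.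

Lemma hinner_subr (u v w : H) : hinner H u (hsub H v w) = hinner H u v - hinner H u w.
Proof. unfold hsub. rewrite hinner_addr, hinner_scalr. ring. Qed.

Lemma hinner_0l (v : H) : hinner H (hzero H) v = 0.
Proof. pose proof (hinner_add H (hzero H) (hzero H) v) as E. rewrite hadd_zero in E. lra. Qed.

Lemma hinner_0r (v : H) : hinner H v (hzero H) = 0.
Proof. rewrite hinner_sym. apply hinner_0l. Qed.

Lemma hscal0 (v : H) : hscal H 0 v = hzero H.
Proof. replace 0 with (1 + -1) by ring. rewrite hscal_distr_r, hscal_one. apply hadd_opp. Qed.

Lemma hsub_add_cancel (u v : H) : hadd H (hsub H u v) v = u.
Proof.
  unfold hsub. rewrite <- hadd_assoc. rewrite <- (hscal_one H v) at 2.
  rewrite <- hscal_distr_r. replace (-1 + 1) with 0 by ring.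
  rewrite hscal0, hadd_comm, hadd_zero. reflexivity.
Qed.

Lemma hsub_eq0 (u v : H) : hsub H u v = hzero H -> u = v.
Proof. intros E. rewrite <- (hsub_add_cancel u v), E, hadd_zero. reflexivity. Qed.

Lemma hvec_ext (u v : H) : (forall w, hinner H u w = hinner H v w) -> u = v.
Proof. intros Hw. apply hsub_eq0, hinner_def. rewrite hinner_subl, Hw. ring. Qed.

Lemma hnorm_ge0 (v : H) : 0 <= hnorm H v.
Proof. apply sqrt_pos. Qed.

Lemma hnorm_sqr (v : H) : hnorm H v * hnorm H v = hinner H v v.
Proof. apply sqrt_sqrt, hinner_pos. Qed.

Lemma hnorm_gt0 (v : H) : v <> hzero H -> 0 < hnorm H v.
Proof.
  intros Hv. apply sqrt_lt_R0. destruct (hinner_pos H v) as [Hp | E]; [exact Hp |].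
  exfalso. apply Hv, hinner_def. auto.
Qed.

Lemma hnorm_le (u : H) B : 0 <= B -> hinner H u u <= B * B -> hnorm H u <= B.
Proof.
  intros HB Hu. unfold hnorm. rewrite <- (sqrt_square B) by exact HB.
  apply sqrt_le_1; [apply hinner_pos | nra | exact Hu].
Qed.

Lemma hnorm_ge (u : H) B : 0 <= B -> B * B <= hinner H u u -> B <= hnorm H u.
Proof.
  intros HB Hu. unfold hnorm. rewrite <- (sqrt_square B) by exact HB.
  apply sqrt_le_1; [nra | apply hinner_pos | exact Hu].
Qed.

Lemma hnorm_scal t (v : H) : hnorm H (hscal H t v) = Rabs t * hnorm H v.
Proof.
  unfold hnorm. rewrite hinner_scal, hinner_scalr, <- Rmult_assoc, sqrt_mult_alt
    by apply Rle_0_sqr.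
  rewrite <- sqrt_Rsqr_abs. reflexivity.
Qed.

Lemma hinner_cauchy_schwarz (u v : H) : Rabs (hinner H u v) <= hnorm H u * hnorm H v.
Proof.
  assert (Hsq : hinner H u v * hinner H u v <= hinner H u u * hinner H v v).
  { destruct (hinner_pos H v) as [Hv | Hv].
    - (* expand 0 <= |u - t v|^2 at the minimiser t = <u,v>/<v,v> *)
      pose (t := hinner H u v / hinner H v v).
      pose proof (hinner_pos H (hsub H u (hscal H t v))) as P.
      rewrite hinner_subl, !hinner_subr, !hinner_scal, !hinner_scalr, (hinner_sym H v u) in P.
      unfold t in P. apply (Rmult_le_compat_r (hinner H v v)) in P; [| lra].
      field_simplify in P; [| lra]. nra.
    - symmetry in Hv. apply hinner_def in Hv. subst v. rewrite !hinner_0r. lra. }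
  rewrite <- (Rabs_pos_eq (hnorm H u * hnorm H v))
    by (apply Rmult_le_pos; apply hnorm_ge0).
  apply Rsqr_le_abs_0. unfold Rsqr.
  replace (hnorm H u * hnorm H v * (hnorm H u * hnorm H v))
    with (hnorm H u * hnorm H u * (hnorm H v * hnorm H v)) by ring.
  rewrite !hnorm_sqr. exact Hsq.
Qed.

Lemma hnorm_sub_le (u v : H) : hnorm H (hsub H u v) <= hnorm H u + hnorm H v.
Proof.
  apply hnorm_le; [pose proof (hnorm_ge0 u); pose proof (hnorm_ge0 v); lra |].
  rewrite hinner_subl, !hinner_subr, (hinner_sym H v u).
  pose proof (hinner_cauchy_schwarz u v). pose proof (Rle_abs (- hinner H u v)) as A.
  rewrite Rabs_Ropp in A.
  rewrite <- (hnorm_sqr u), <- (hnorm_sqr v). nra.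
Qed.

Lemma hnorm_le_sub (u v : H) : hnorm H u <= hnorm H v + hnorm H (hsub H v u).
Proof.
  replace u with (hsub H v (hsub H v u)) at 1.
  - apply hnorm_sub_le.
  - apply hvec_ext. intros w. rewrite !hinner_subl. ring.
Qed.

End HilbertAlgebra.

Ltac hinner_simpl :=
  repeat progress rewrite ?hinner_subl, ?hinner_subr, ?hinner_add, ?hinner_addr, ?hinner_scal,
    ?hinner_scalr, ?hinner_0l, ?hinner_0r.

Section Projections.
Variables (H : HilbertSpace) (e : nat -> H).

Lemma proj_low_S N (v : H) :
  proj_low H e (S N) v = hadd H (proj_low H e N v) (hscal H (hinner H v (e N)) (e N)).
Proof. reflexivity. Qed.

Lemma hinner_proj_low_sub N (u v w : H) :
  hinner H (proj_low H e N (hsub H u v)) w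
  = hinner H (proj_low H e N u) w - hinner H (proj_low H e N v) w.
Proof.
  induction N as [| N IH]; [unfold proj_low; simpl; hinner_simpl; ring |].
  rewrite !proj_low_S. hinner_simpl. rewrite IH. ring.
Qed.

Lemma proj_low_sub N (u v : H) :
  proj_low H e N (hsub H u v) = hsub H (proj_low H e N u) (proj_low H e N v).
Proof. apply hvec_ext. intros w. rewrite hinner_proj_low_sub, hinner_subl. reflexivity. Qed.

Lemma proj_high_sub N (u v : H) :
  proj_high H e N (hsub H u v) = hsub H (proj_high H e N u) (proj_high H e N v).
Proof.
  apply hvec_ext. intros w. unfold proj_high. rewrite proj_low_sub. hinner_simpl. ring.
Qed.

Lemma hinner_proj_low_orth N (v w : H) :
  (forall k, (k < N)%nat -> hinner H (e k) w = 0) -> hinner H (proj_low H e N v) w = 0.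
Proof.
  induction N as [| N IH]; intros Hw; [unfold proj_low; simpl; apply hinner_0l |].
  rewrite proj_low_S. hinner_simpl. rewrite IH by (intros; apply Hw; lia).
  rewrite Hw by lia. ring.
Qed.

Hypothesis He : orthonormal_basis H e.

Lemma hinner_proj_low_e N (v : H) j :
  hinner H (proj_low H e N v) (e j) = if Nat.ltb j N then hinner H v (e j) else 0.
Proof.
  destruct He as [Hon _].
  induction N as [| N IH]; [unfold proj_low; simpl; apply hinner_0l |].
  rewrite proj_low_S. hinner_simpl. rewrite IH, Hon.
  destruct (Nat.ltb_spec j N), (Nat.ltb_spec j (S N)), (Nat.eq_dec N j);
    (lia || (subst; ring)).
Qed.

Lemma hinner_proj_high_e N (v : H) k :
  (k < N)%nat -> hinner H (proj_high H e N v) (e k) = 0.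
Proof.
  intros Hk. unfold proj_high. rewrite hinner_subl, hinner_proj_low_e.
  destruct (Nat.ltb_spec k N); lia || ring.
Qed.

Lemma hinner_proj_low_S N (v : H) :
  hinner H (proj_low H e (S N) v) (proj_low H e (S N) v)
  = hinner H (proj_low H e N v) (proj_low H e N v) + hinner H v (e N) * hinner H v (e N).
Proof.
  destruct He as [Hon _].
  rewrite proj_low_S. hinner_simpl.
  rewrite (hinner_sym H (e N)), hinner_proj_low_e, Nat.ltb_irrefl, Hon.
  destruct (Nat.eq_dec N N); [ring | lia].
Qed.

Lemma hinner_proj_low_self N (v : H) :
  hinner H (proj_low H e N v) v = hinner H (proj_low H e N v) (proj_low H e N v).
Proof.
  induction N as [| N IH]; [unfold proj_low; simpl; rewrite !hinner_0l; reflexivity |].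
  rewrite hinner_proj_low_S, proj_low_S. hinner_simpl. rewrite IH, (hinner_sym H (e N)). ring.
Qed.

Lemma bessel N (v : H) :
  hinner H (proj_low H e N v) (proj_low H e N v) <= hinner H v v.
Proof.
  pose proof (hinner_pos H (hsub H v (proj_low H e N v))) as P.
  revert P. hinner_simpl.
  rewrite (hinner_sym H v (proj_low H e N v)), hinner_proj_low_self. lra.
Qed.

End Projections.

Section DiagonalOperator.
Variables (H : HilbertSpace) (e : nat -> H) (lam : nat -> R) (G : H -> H).
Hypothesis He : orthonormal_basis H e.
Hypothesis HGsym : symmetric_op H G.
Hypothesis HGe : forall k, G (e k) = hscal H (lam k) (e k).

Lemma hinner_G_e (v : H) k : hinner H (G v) (e k) = lam k * hinner H v (e k).
Proof. rewrite HGsym, HGe, hinner_scalr. reflexivity. Qed.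

Lemma hinner_G_proj_low_high N (v w : H) :
  hinner H (G (proj_low H e N v)) (proj_high H e N w) = 0.
Proof.
  rewrite HGsym. apply hinner_proj_low_orth. intros k Hk.
  rewrite <- HGsym, HGe, hinner_scal, hinner_sym, hinner_proj_high_e by assumption. ring.
Qed.

(* Truncations of [G v] are controlled coefficientwise, and converge to [G v]. *)
Lemma diagonal_op_norm_le (v : H) c :
  0 <= c -> (forall k, hinner H v (e k) = 0 \/ Rabs (lam k) <= c) ->
  hnorm H (G v) <= c * hnorm H v.
Proof.
  intros Hc Hlam.
  assert (Htrunc : forall N, hinner H (proj_low H e N (G v)) (proj_low H e N (G v))
                             <= c * c * hinner H (proj_low H e N v) (proj_low H e N v)).
  { induction N as [| N IH]; [unfold proj_low; simpl; rewrite !hinner_0l; lra |].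
    rewrite !hinner_proj_low_S, hinner_G_e by exact He.
    assert (Hk : (lam N * hinner H v (e N)) * (lam N * hinner H v (e N))
                 <= c * c * (hinner H v (e N) * hinner H v (e N))).
    { destruct (Hlam N) as [-> | Hl]; [lra |].
      assert (Hl2 : lam N * lam N <= c * c).
      { pose proof (Rsqr_abs (lam N)). pose proof (Rabs_pos (lam N)). unfold Rsqr in *. nra. }
      pose proof (Rle_0_sqr (hinner H v (e N))). unfold Rsqr in *. nra. }
    lra. }
  apply Rle_plus_epsilon. intros eps Heps.
  destruct He as [_ Hconv]. destruct (Hconv (G v) eps Heps) as [N HN].
  specialize (HN N (le_n N)).
  pose proof (hnorm_le_sub H (G v) (proj_low H e N (G v))) as T.
  assert (hnorm H (proj_low H e N (G v)) <= c * hnorm H v).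
  { apply hnorm_le; [pose proof (hnorm_ge0 H v); nra |].
    apply (Rle_trans _ _ _ (Htrunc N)).
    replace (c * hnorm H v * (c * hnorm H v)) with (c * c * (hnorm H v * hnorm H v)) by ring.
    rewrite hnorm_sqr. apply Rmult_le_compat_l; [nra | apply bessel, He]. }
  unfold proj_low in *. lra.
Qed.

Lemma hinner_G_proj_high_low N (v w : H) :
  hinner H (G (proj_high H e N v)) (proj_low H e N w) = 0.
Proof. rewrite HGsym, hinner_sym. apply hinner_G_proj_low_high. Qed.

Hypothesis Hlam_pos : forall k, 0 < lam k.
Hypothesis Hlam_decr : Un_decreasing lam.

Lemma diagonal_op_norm_le_head (v : H) : hnorm H (G v) <= lam 0%nat * hnorm H v.
Proof.
  apply diagonal_op_norm_le; [now left |]. intros k. right.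
  rewrite Rabs_pos_eq by now left. apply decreasing_prop; [exact Hlam_decr | lia].
Qed.

Lemma diagonal_op_norm_le_tail N (v : H) :
  hnorm H (G (proj_high H e N v)) <= lam N * hnorm H (proj_high H e N v).
Proof.
  apply diagonal_op_norm_le; [now left |]. intros k.
  destruct (Nat.lt_ge_cases k N) as [Hk | Hk].
  - left. apply hinner_proj_high_e; assumption.
  - right. rewrite Rabs_pos_eq by now left. apply decreasing_prop; assumption.
Qed.

End DiagonalOperator.

Section FrechetGradient.
Variable H : HilbertSpace.

(* Testing both expansions along [h = t (g1 x - g2 x)] gives [|g1 x - g2 x| <= 2 eps]. *)
Lemma frechet_gradient_unique (f : H -> R) (g1 g2 : H -> H) :
  frechet_gradient H f g1 -> frechet_gradient H f g2 -> forall x, g1 x = g2 x.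
Proof.
  intros Hg1 Hg2 x. apply hsub_eq0.
  set (d := hsub H (g1 x) (g2 x)).
  apply NNPP. intros Hd. apply hnorm_gt0 in Hd. set (D := hnorm H d) in Hd.
  set (eps := D / 4).
  destruct (Hg1 x eps) as [d1 [Hd1 H1]]; [unfold eps; lra |].
  destruct (Hg2 x eps) as [d2 [Hd2 H2]]; [unfold eps; lra |].
  set (t := Rmin d1 d2 / (2 * D)).
  assert (Ht : 0 < t) by (apply Rdiv_lt_0_compat; [apply Rmin_glb_lt |]; lra).
  set (h := hscal H t d).
  assert (Hh : hnorm H h = t * D) by (unfold h; rewrite hnorm_scal, Rabs_pos_eq; [reflexivity | lra]).
  assert (Hsmall : t * D < Rmin d1 d2).
  { unfold t. replace (Rmin d1 d2 / (2 * D) * D) with (Rmin d1 d2 / 2) by (field; lra).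
    pose proof (Rmin_glb_lt d1 d2 0 Hd1 Hd2). lra. }
  specialize (H1 h). specialize (H2 h). rewrite Hh in H1, H2.
  pose proof (H1 ltac:(pose proof (Rmin_l d1 d2); lra)) as E1.
  pose proof (H2 ltac:(pose proof (Rmin_r d1 d2); lra)) as E2.
  assert (Hdh : hinner H (g1 x) h - hinner H (g2 x) h = t * (D * D)).
  { unfold h. rewrite <- hinner_subl, hinner_scalr. fold d. unfold D. rewrite hnorm_sqr. reflexivity. }
  pose proof (Rle_abs (hinner H (g1 x) h - hinner H (g2 x) h)) as A.
  pose proof (Rabs_triang (f (hadd H x h) - f x - hinner H (g2 x) h)
                          (- (f (hadd H x h) - f x - hinner H (g1 x) h))) as T.
  rewrite Rabs_Ropp in T.
  replace (f (hadd H x h) - f x - hinner H (g2 x) h + - (f (hadd H x h) - f x - hinner H (g1 x) h))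
    with (hinner H (g1 x) h - hinner H (g2 x) h) in T by ring.
  assert (0 < t * (D * D)) by (apply Rmult_lt_0_compat; nra).
  assert (eps * (t * D) = t * (D * D) / 4) by (unfold eps; field).
  lra.
Qed.

Lemma frechet_gradient_add (f1 f2 f : H -> R) (g1 g2 : H -> H) :
  (forall x, f x = f1 x + f2 x) ->
  frechet_gradient H f1 g1 -> frechet_gradient H f2 g2 ->
  frechet_gradient H f (fun x => hadd H (g1 x) (g2 x)).
Proof.
  intros Hf Hg1 Hg2 x eps Heps.
  destruct (Hg1 x (eps / 2)) as [d1 [Hd1 H1]]; [lra |].
  destruct (Hg2 x (eps / 2)) as [d2 [Hd2 H2]]; [lra |].
  exists (Rmin d1 d2). split; [apply Rmin_glb_lt; lra |]. intros h Hh.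
  specialize (H1 h (Rlt_le_trans _ _ _ Hh (Rmin_l d1 d2))).
  specialize (H2 h (Rlt_le_trans _ _ _ Hh (Rmin_r d1 d2))).
  rewrite !Hf, hinner_add.
  replace (f1 (hadd H x h) + f2 (hadd H x h) - (f1 x + f2 x)
           - (hinner H (g1 x) h + hinner H (g2 x) h))
    with ((f1 (hadd H x h) - f1 x - hinner H (g1 x) h)
          + (f2 (hadd H x h) - f2 x - hinner H (g2 x) h)) by ring.
  eapply Rle_trans; [apply Rabs_triang | lra].
Qed.

Lemma frechet_gradient_half_sqr a :
  frechet_gradient H (fun x => a / 2 * hnorm H x ^ 2) (fun x => hscal H a x).
Proof.
  intros x eps Heps. pose proof (Rabs_pos a) as Ha.
  exists (2 * eps / (Rabs a + 1)). split; [apply Rdiv_lt_0_compat; lra |]. intros h Hh.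
  assert (E : a / 2 * hnorm H (hadd H x h) ^ 2 - a / 2 * hnorm H x ^ 2 - hinner H (hscal H a x) h
              = a / 2 * (hnorm H h * hnorm H h)).
  { rewrite <- !Rsqr_pow2. unfold Rsqr. rewrite !hnorm_sqr. hinner_simpl. rewrite (hinner_sym H h x). lra. }
  pose proof (hnorm_ge0 H h).
  rewrite E, Rabs_mult, (Rabs_pos_eq (hnorm H h * hnorm H h)) by nra.
  apply Rmult_lt_compat_r with (r := Rabs a + 1) in Hh; [| lra].
  replace (2 * eps / (Rabs a + 1) * (Rabs a + 1)) with (2 * eps) in Hh by (field; lra).
  unfold Rdiv. rewrite Rabs_mult, (Rabs_pos_eq (/ 2)) by lra.
  assert (Rabs a * hnorm H h <= 2 * eps) by nra.
  nra.
Qed.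

Lemma frechet_gradient_half_sqr_add a (m U : H -> R) (gm gU : H -> H) :
  (forall x, U x = a / 2 * hnorm H x ^ 2 + m x) ->
  frechet_gradient H m gm -> frechet_gradient H U gU ->
  forall x, gU x = hadd H (hscal H a x) (gm x).
Proof.
  intros HU Hm HgU. apply (frechet_gradient_unique U); [exact HgU |].
  apply (frechet_gradient_add (fun x => a / 2 * hnorm H x ^ 2) m);
    [exact HU | apply frechet_gradient_half_sqr | exact Hm].
Qed.

End FrechetGradient.

Section Drift.
Variable H : HilbertSpace.

(* Moving from [p] by [R] along a unit vector not pointing back towards the origin
   leaves the ball of radius [R], where [f] vanishes. *)
Lemma lipschitz_vanishing_bound (f : H -> H) L Rc (u p : H) :
  hinner H u u = 1 -> 0 < Rc ->
  (forall x y, hnorm H (hsub H (f x) (f y)) <= L * hnorm H (hsub H x y)) ->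
  (forall x, hnorm H x >= Rc -> f x = hzero H) ->
  hnorm H (f p) <= L * Rc.
Proof.
  intros Hu HRc Hlip Hvan.
  assert (Hu' : exists u', hinner H u' u' = 1 /\ 0 <= hinner H p u').
  { destruct (Rle_dec 0 (hinner H p u)) as [Hp | Hp]; [exists u; auto |].
    exists (hscal H (-1) u). hinner_simpl. rewrite Hu. split; [ring | lra]. }
  destruct Hu' as [u' [Hu'1 Hu'2]].
  set (q := hadd H p (hscal H Rc u')).
  assert (Hq : hnorm H q >= Rc).
  { apply Rle_ge, hnorm_ge; [lra |]. unfold q. hinner_simpl.
    rewrite (hinner_sym H u' p), Hu'1. pose proof (hinner_pos H p). nra. }
  assert (Hpq : hnorm H (hsub H p q) = Rc).
  { apply Rle_antisym; [apply hnorm_le | apply hnorm_ge]; try lra;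
      unfold q; hinner_simpl; rewrite (hinner_sym H u' p), Hu'1; nra. }
  specialize (Hlip p q). rewrite (Hvan q Hq), Hpq in Hlip.
  replace (hnorm H (f p)) with (hnorm H (hsub H (f p) (hzero H))); [exact Hlip |].
  unfold hnorm. hinner_simpl. f_equal. ring.
Qed.

Variable G : H -> H.
Hypothesis HGsym : symmetric_op H G.
Hypothesis HGpos : positive_definite_op H G.

Lemma symmetric_op_sub_opp (u v : H) :
  hsub H (hscal H (-1) (G u)) (hscal H (-1) (G v)) = hscal H (-1) (G (hsub H u v)).
Proof. apply hvec_ext. intros w. hinner_simpl. rewrite !HGsym. hinner_simpl. ring. Qed.

(* The confining part [-a G v] only helps, since [<G v, v> > 0] and [<G v, w> = 0]. *)
Lemma drift_component_le a c (v w g : H) :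
  0 <= a -> v <> hzero H -> hnorm H (G v) <= c * hnorm H v -> hinner H (G v) w = 0 ->
  hinner H (hscal H (/ hnorm H v) v) (hscal H (-1) (G (hadd H (hscal H a (hadd H v w)) g)))
  <= c * hnorm H g.
Proof.
  intros Ha Hv HGv Horth.
  pose proof (hnorm_gt0 H v Hv) as Hnv. pose proof (HGpos v Hv) as Hvv.
  pose proof (hinner_cauchy_schwarz H (G v) g) as CS.
  pose proof (Rle_abs (- hinner H (G v) g)) as A. rewrite Rabs_Ropp in A.
  pose proof (hnorm_ge0 H g).
  rewrite hinner_scal, hinner_scalr, <- HGsym. hinner_simpl. rewrite Horth.
  apply (Rmult_le_reg_l (hnorm H v)); [exact Hnv |].
  rewrite <- Rmult_assoc, Rinv_r by lra. nra.
Qed.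

Lemma indic_drift_component_le (P : Prop) a c (v w g : H) :
  0 <= a -> 0 <= c -> (P -> v <> hzero H) ->
  hnorm H (G v) <= c * hnorm H v -> hinner H (G v) w = 0 ->
  indic P
  * hinner H (hscal H (/ hnorm H v) v) (hscal H (-1) (G (hadd H (hscal H a (hadd H v w)) g)))
  <= c * hnorm H g.
Proof.
  intros Ha Hc Hv HGv Horth. unfold indic.
  destruct (excluded_middle_informative P) as [HP | _].
  - rewrite Rmult_1_l. apply drift_component_le; auto.
  - pose proof (hnorm_ge0 H g). nra.
Qed.

End Drift.

Theorem mainTheorem12
  (H : HilbertSpace) (e : nat -> H) (lam : nat -> R) (G : H -> H)
  (a L : R) (m : H -> R) (gm : H -> H) (U : H -> R) (gU : H -> H)
  (n : nat) (Rcal : R) :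
  (* orthonormal basis (hence H separable); e k, lam k stand for e_{k+1}, lambda_{k+1} *)
  orthonormal_basis H e ->
  (* G: trace-class, symmetric, positive definite, with G e_k = lambda_k e_k *)
  bounded_linear H G -> symmetric_op H G -> positive_definite_op H G ->
  (forall k, G (e k) = hscal H (lam k) (e k)) ->
  (forall k, lam k > 0) ->
  (forall k, lam (S k) <= lam k) ->
  Un_cv lam 0 ->
  lam 0%nat = 1 ->
  (exists s, infinite_sum lam s) ->
  (* potential *)
  a >= 0 -> L >= 1 ->
  (exists c, forall x, c <= m x) ->
  frechet_gradient H m gm ->
  (forall x y, hnorm H (hsub H (gm x) (gm y)) <= L * hnorm H (hsub H x y)) ->
  (forall x, U x = a / 2 * (hnorm H x) ^ 2 + m x) ->
  frechet_gradient H U gU ->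
  (* n = min { k >= 1 : lambda_{k+1} < 1/(2L) } *)
  (1 <= n)%nat -> lam n < / (2 * L) ->
  (forall k, (1 <= k)%nat -> (k < n)%nat -> lam k >= / (2 * L)) ->
  (* extra assumption *)
  Rcal > 0 ->
  (forall x, hnorm H x >= Rcal -> gm x = hzero H) ->
  let b := fun x => hscal H (-1) (G (gU x)) in
  let alpha := 2 * (1 + L) in
  let M := 3 / 4 in
  let Rr := 8 * L * Rcal in
  forall x y : H,
    norm_alpha H e n alpha (hsub H x y) >= Rr ->
    let dl := hsub H (proj_low H e n x) (proj_low H e n y) in
    let dh := hsub H (proj_high H e n x) (proj_high H e n y) in
    indic (proj_low H e n x <> proj_low H e n y)
      * hinner H (hscal H (/ hnorm H dl) dl) (hsub H (b x) (b y))
    + indic (proj_high H e n x <> proj_high H e n y)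
      * alpha * hinner H (hscal H (/ hnorm H dh) dh) (hsub H (b x) (b y))
    <= M * norm_alpha H e n alpha (hsub H x y).
Proof.
  intros He _ Hsym Hpos HGe Hlam Hdecr _ Hlam0 _ Ha HL _ Hm Hlip HU HgU _ Hlam_n _ HRcal Hvan
    b alpha M Rr x y Hxy.
  cbv zeta. unfold norm_alpha in *. rewrite <- proj_low_sub, <- proj_high_sub.
  set (dl := proj_low H e n (hsub H x y)) in *.
  set (dh := proj_high H e n (hsub H x y)) in *.
  set (g := hsub H (gm x) (gm y)).
  pose proof (frechet_gradient_half_sqr_add H a m U gm gU HU Hm HgU) as HgU_eq.
  assert (Hdrift : hsub H (b x) (b y) = hscal H (-1) (G (hadd H (hscal H a (hadd H dl dh)) g))).
  { unfold b. rewrite symmetric_op_sub_opp by exact Hsym. do 2 f_equal.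
    apply hvec_ext. intros w. rewrite !HgU_eq. unfold g, dl, dh, proj_high. hinner_simpl. ring. }
  assert (Hg : hnorm H g <= 2 * L * Rcal).
  { assert (He0 : hinner H (e 0%nat) (e 0%nat) = 1).
    { destruct He as [Hon _]. rewrite Hon. destruct (Nat.eq_dec 0 0); [reflexivity | lia]. }
    pose proof (lipschitz_vanishing_bound H gm L Rcal (e 0%nat) x He0 HRcal Hlip Hvan).
    pose proof (lipschitz_vanishing_bound H gm L Rcal (e 0%nat) y He0 HRcal Hlip Hvan).
    pose proof (hnorm_sub_le H (gm x) (gm y)). unfold g. lra. }
  assert (Hlow : indic (proj_low H e n x <> proj_low H e n y)
                 * hinner H (hscal H (/ hnorm H dl) dl) (hsub H (b x) (b y)) <= 1 * hnorm H g).
  { rewrite Hdrift. apply indic_drift_component_le; auto; try lra.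
    - intros Hne E. apply Hne, hsub_eq0. rewrite <- proj_low_sub. exact E.
    - rewrite <- Hlam0. apply (diagonal_op_norm_le_head H e); assumption.
    - apply (hinner_G_proj_low_high H e lam); assumption. }
  assert (Hhigh : indic (proj_high H e n x <> proj_high H e n y)
                  * hinner H (hscal H (/ hnorm H dh) dh) (hsub H (b x) (b y)) <= lam n * hnorm H g).
  { rewrite Hdrift, (hadd_comm H dl dh). apply indic_drift_component_le; auto; try lra.
    - left. apply Hlam.
    - intros Hne E. apply Hne, hsub_eq0. rewrite <- proj_high_sub. exact E.
    - apply (diagonal_op_norm_le_tail H e); assumption.
    - apply (hinner_G_proj_high_low H e lam); assumption. }
  (* [lam n < 1 / (2 L)] gives [alpha lam n < 1 + 1 / L <= 2]. *)
  assert (Halpha : alpha * lam n <= 2).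
  { apply (Rmult_lt_compat_r (2 * L)) in Hlam_n; [| lra]. rewrite Rinv_l in Hlam_n by lra.
    unfold alpha. pose proof (Hlam n). nra. }
  pose proof (Rmult_le_compat_l alpha _ _ ltac:(unfold alpha; lra) Hhigh).
  pose proof (Rmult_le_compat_r (hnorm H g) _ _ (hnorm_ge0 H g) Halpha).
  unfold M, Rr in *. nra.
Qed.
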